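(* Let $A$ be a commutative Noetherian ring of Krull dimension $d\geq 1$ and let $s$ be a non-zero-divisor of $A$. Then the generalized dimension of the localization $A_{1+sA}$ is $\leq d-1$.
   Context: Let $B$ be a commutative ring. For a function $\delta:\mathrm{Spec}(B)\to\mathbb{N}\cup\{0\}$, define a partial order on $\mathrm{Spec}(B)$ by $\mathfrak p\ll\mathfrak q$ if $\mathfrak p\subset\mathfrak q$ and $\delta(\mathfrak p)>\delta(\mathfrak q)$. Such a $\delta$ is a generalized dimension function if for every ideal $J$ of $B$, the set $V(J)$ has only finitely many minimal elements with respect to $\ll$. The generalized dimension of $B$ is the minimum, over all generalized dimension functions $\delta$ on $\mathrm{Spec}(B)$, of $\max_{\mathfrak p\in\mathrm{Spec}(B)}\delta(\mathfrak p)$. Here $A_{1+sA}$ denotes the localization of $A$ at the multiplicative set $1+sA$. *)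

From mathcomp Require Import all_boot all_algebra.
Set Implicit Arguments. Unset Strict Implicit. Unset Printing Implicit Defensive.
Import GRing.Theory.
Local Open Scope ring_scope.

Definition is_ideal (R : comNzRingType) (I : R -> Prop) : Prop :=
  [/\ I 0,
      (forall x y, I x -> I y -> I (x + y)) &
      (forall r x, I x -> I (r * x))].

Definition is_prime_ideal (R : comNzRingType) (P : R -> Prop) : Prop :=
  [/\ is_ideal P, ~ P 1 & (forall a b, P (a * b) -> P a \/ P b)].

Definition spec (R : comNzRingType) := {P : R -> Prop | is_prime_ideal P}.

Definition sub_ideal (R : comNzRingType) (I J : R -> Prop) : Prop :=
  forall x, I x -> J x.

Definition in_V (R : comNzRingType) (J : R -> Prop) (p : spec R) : Prop :=
  sub_ideal J (sval p).

Definition gd_lt (R : comNzRingType) (delta : spec R -> nat) (p q : spec R) : Prop :=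
  sub_ideal (sval p) (sval q) /\ (delta q < delta p)%N.

Definition gd_minimal (R : comNzRingType) (delta : spec R -> nat)
    (J : R -> Prop) (p : spec R) : Prop :=
  in_V J p /\ ~ (exists q, in_V J q /\ gd_lt delta q p).

Definition is_gen_dim_fun (R : comNzRingType) (delta : spec R -> nat) : Prop :=
  forall J : R -> Prop, is_ideal J ->
    exists (n : nat) (f : 'I_n -> spec R),
      forall p, gd_minimal delta J p -> exists i, p = f i.

(* "generalized dimension of R is <= n": the minimum over generalized dimension
   functions of max delta is <= n, i.e. some generalized dimension function
   delta satisfies delta p <= n for all p. *)
Definition gen_dim_le (R : comNzRingType) (n : nat) : Prop :=
  exists delta : spec R -> nat,
    is_gen_dim_fun delta /\ forall p, (delta p <= n)%N.

Definition noetherian (R : comNzRingType) : Prop :=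
  forall I : nat -> R -> Prop,
    (forall n, is_ideal (I n)) ->
    (forall n, sub_ideal (I n) (I n.+1)) ->
    exists N, forall n, (N <= n)%N -> sub_ideal (I n) (I N).

Definition prime_chain (R : comNzRingType) (n : nat) (c : nat -> R -> Prop) : Prop :=
  (forall i, (i <= n)%N -> is_prime_ideal (c i)) /\
  (forall i, (i < n)%N ->
     sub_ideal (c i) (c i.+1) /\ exists x, c i.+1 x /\ ~ c i x).

Definition krull_dim_eq (R : comNzRingType) (d : nat) : Prop :=
  (exists c : nat -> R -> Prop, prime_chain d c) /\ (forall n (c : nat -> R -> Prop), prime_chain n c -> (n <= d)%N).

Definition non_zero_divisor (R : comNzRingType) (s : R) : Prop :=
  forall a : R, s * a = 0 -> a = 0.

Definition in_one_plus (R : comNzRingType) (s u : R) : Prop :=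
  exists a, u = 1 + s * a.

(* f : A -> B is a localization of A at the multiplicative set 1 + sA
   (standard characterization up to unique isomorphism). *)
Definition is_localization_1sA (A B : comNzRingType) (s : A)
    (f : {rmorphism A -> B}) : Prop :=
  [/\ (forall u, in_one_plus s u -> exists v : B, f u * v = 1),
      (forall b : B, exists a u, in_one_plus s u /\ b * f u = f a) &
      (forall a, f a = 0 -> exists u, in_one_plus s u /\ u * a = 0)].

From mathcomp Require Import all_boot all_algebra.
From mathcomp Require Import ring zify boolp.
Set Implicit Arguments. Unset Strict Implicit. Unset Printing Implicit Defensive.
Import GRing.Theory.
Local Open Scope ring_scope.

(* The localization B = A_{1+sA} is Noetherian of dimension at most d, and
   t = s/1 is a non-zero-divisor of B lying in its Jacobson radical.  Let
   delta(p) be the coheight of p (the length of the longest chain of primes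
   starting at p), lowered by one when t is not in p.  A prime containing t
   lies strictly above a prime avoiding t (t is regular), so its coheight is
   < d; a prime p avoiding t lies strictly below a prime containing p + tB,
   which is proper since t is in the Jacobson radical, so its coheight is
   positive.  Hence delta <= d - 1, and delta strictly decreases along
   proper inclusions that do not cross V(t).  A <<-minimal element of V(J)
   is therefore a minimal prime of J or of J + tB, and a Noetherian ring has
   only finitely many of those. *)

Definition in_jacobson (R : comNzRingType) (t : R) : Prop :=
  forall b, exists w, (1 + t * b) * w = 1.

Definition finitely_many (T : Type) (P : T -> Prop) : Prop :=
  exists n (g : 'I_n -> T), forall x, P x -> exists i, x = g i.

Section FinitelyMany.
Variable T : Type.

Lemma finitely_many_sub (P Q : T -> Prop) :
  (forall x, P x -> Q x) -> finitely_many Q -> finitely_many P.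
Proof. by move=> PQ [n [g Qg]]; exists n, g => x /PQ /Qg. Qed.

Lemma finitely_manyU (P Q : T -> Prop) :
  finitely_many P -> finitely_many Q -> finitely_many (fun x => P x \/ Q x).
Proof.
move=> [n1 [g1 Pg1]] [n2 [g2 Qg2]].
exists (n1 + n2)%N, (fun i => match split i with inl j => g1 j | inr k => g2 k end).
move=> x [/Pg1 [j ->] | /Qg2 [k ->]].
- by exists (lshift n2 j); rewrite (unsplitK (inl j)).
- by exists (rshift n1 k); rewrite (unsplitK (inr k)).
Qed.

Lemma finitely_many1 (a : T) : finitely_many (fun x => x = a).
Proof. by exists 1%N, (fun=> a) => x ->; exists ord0. Qed.

Lemma finitely_many0 : finitely_many (fun _ : T => False).
Proof. by exists 0%N; unshelve eexists => [[]|]. Qed.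

End FinitelyMany.

Section Ideals.
Variable R : comNzRingType.
Implicit Types (I J M : R -> Prop) (p q : spec R).

Lemma spec_eq p q : sub_ideal (sval p) (sval q) -> sub_ideal (sval q) (sval p) -> p = q.
Proof.
case: p q => [P HP] [Q HQ] /= PQ QP.
by apply: eq_exist; apply/predeqP => x; split; [exact: PQ | exact: QP].
Qed.

Lemma non_zero_divisorX (t : R) k : non_zero_divisor t -> non_zero_divisor (t ^+ k).
Proof.
move=> t_reg; elim: k => [|k IHk] a; first by rewrite expr0 mul1r.
by rewrite exprS -mulrA => /t_reg /IHk.
Qed.

Definition ideal_adjoin M (a : R) : R -> Prop :=
  fun x => exists m r, M m /\ x = m + r * a.

Lemma ideal_adjoin_ideal M a : is_ideal M -> is_ideal (ideal_adjoin M a).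
Proof.
case=> M0 MD MM; split.
- by exists 0, 0; rewrite mul0r addr0.
- move=> _ _ [m [r [Mm ->]]] [m' [r' [Mm' ->]]].
  exists (m + m'), (r + r'); split; [exact: MD | by rewrite mulrDl addrACA].
- move=> r0 _ [m [r [Mm ->]]].
  exists (r0 * m), (r0 * r); split; [exact: MM | by rewrite mulrDr mulrA].
Qed.

Lemma sub_ideal_adjoin M a : is_ideal M -> sub_ideal M (ideal_adjoin M a).
Proof. by case=> M0 _ _ x Mx; exists x, 0; rewrite mul0r addr0. Qed.

Lemma ideal_adjoin_mem M a : is_ideal M -> ideal_adjoin M a a.
Proof. by case=> M0 _ _; exists 0, 1; rewrite mul1r add0r. Qed.

Lemma ideal_adjoin_sub M I a :
  is_ideal I -> sub_ideal M I -> I a -> sub_ideal (ideal_adjoin M a) I.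
Proof. by move=> [_ ID IM] MI Ia _ [m [r [Mm ->]]]; apply: ID; [apply: MI | apply: IM]. Qed.

Lemma ideal_adjoin_jacobson I t :
  is_ideal I -> ~ I 1 -> in_jacobson t -> ~ ideal_adjoin I t 1.
Proof.
move=> [_ _ IM] I1 t_jac [m [r [Im one]]]; apply: I1.
have [w mw] := t_jac (- r).
have m_eq : 1 + t * - r = m by rewrite one; ring.
by rewrite -mw m_eq mulrC; apply: IM.
Qed.

(* Without a maximal element, dependent choice yields a strictly ascending
   chain of ideals. *)
Lemma noetherian_maximal (P : (R -> Prop) -> Prop) I0 :
  noetherian R -> is_ideal I0 -> P I0 ->
  exists M, [/\ is_ideal M, P M &
    forall J, is_ideal J -> P J -> sub_ideal M J -> sub_ideal J M].
Proof.
move=> noethR I0_ideal PI0; apply: contrapT => no_max.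
have step (K : {K | is_ideal K /\ P K}) :
    {K' : {K | is_ideal K /\ P K} |
       sub_ideal (sval K) (sval K') /\ ~ sub_ideal (sval K') (sval K)}.
  case: K => K [K_ideal PK]; apply: cid; apply: contrapT => K_max.
  apply: no_max; exists K; split=> // J J_ideal PJ KJ; apply: contrapT => JK.
  by apply: K_max; exists (exist _ J (conj J_ideal PJ)).
pose chain n := iter n (fun K => sval (step K)) (exist _ I0 (conj I0_ideal PI0)).
have [n|n|N IN] := noethR (fun n => sval (chain n)).
- exact: (proj1 (svalP (chain n))).
- exact: (proj1 (svalP (step _))).
exact: (proj2 (svalP (step _))) (IN N.+1 (leqnSn N)).
Qed.

Lemma maximal_avoiding_prime (S : R -> Prop) Q :
  S 1 -> (forall x y, S x -> S y -> S (x * y)) ->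
  is_ideal Q -> (forall x, Q x -> ~ S x) ->
  (forall J, is_ideal J -> (forall x, J x -> ~ S x) -> sub_ideal Q J -> sub_ideal J Q) ->
  is_prime_ideal Q.
Proof.
move=> S1 SM Q_ideal QS Q_max; split=> // [Q1|a b Qab]; first exact: QS Q1 S1.
have meet_S c : ~ Q c -> exists m r, Q m /\ S (m + r * c).
  move=> Qc; apply: contrapT => no_meet; apply: Qc.
  apply: (Q_max _ (ideal_adjoin_ideal c Q_ideal)).
  - by move=> _ [m [r [Qm ->]]] Sx; apply: no_meet; exists m, r.
  - exact: sub_ideal_adjoin.
  - exact: ideal_adjoin_mem.
apply: contrapT => /not_orP [/meet_S [m [r [Qm Sa]]] /meet_S [m' [r' [Qm' Sb]]]].
apply: (QS _ _ (SM _ _ Sa Sb)); case: Q_ideal => _ QD QM.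
have -> : (m + r * a) * (m' + r' * b)
  = (m + r * a) * m' + (r' * b) * m + (r * r') * (a * b) by ring.
by apply: (QD); [apply: (QD) |]; apply: QM.
Qed.

Lemma noetherian_prime_avoiding (S : R -> Prop) I :
  noetherian R -> S 1 -> (forall x y, S x -> S y -> S (x * y)) ->
  is_ideal I -> (forall x, I x -> ~ S x) ->
  exists Q : spec R, sub_ideal I (sval Q) /\ forall x, sval Q x -> ~ S x.
Proof.
move=> noethR S1 SM I_ideal IS.
have [|Q [Q_ideal [IQ QS] Q_max]] :=
  noetherian_maximal (P := fun J => sub_ideal I J /\ forall x, J x -> ~ S x)
    noethR I_ideal.
  by split.
have Q_prime : is_prime_ideal Q.
  apply: (maximal_avoiding_prime S1 SM Q_ideal QS) => J J_ideal JS QJ.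
  by apply: Q_max => //; split=> // x /IQ /QJ.
by exists (exist _ Q Q_prime).
Qed.

Definition finitely_based_V J : Prop :=
  exists F : spec R -> Prop, [/\ finitely_many F, forall q, F q -> in_V J q &
    forall p, in_V J p -> exists2 q, F q & sub_ideal (sval q) (sval p)].

Lemma finitely_based_V_unit J : J 1 -> finitely_based_V J.
Proof.
move=> J1; exists (fun _ => False); split=> //; first exact: finitely_many0.
by move=> p /(_ 1 J1) p1; case: (svalP p) => _ /(_ p1).
Qed.

Lemma finitely_based_V_prime p : finitely_based_V (sval p).
Proof.
exists (fun q => q = p); split=> [|_ -> //|q pq]; [exact: finitely_many1 | by exists p].
Qed.

Lemma finitely_based_V_split M a b : is_ideal M -> M (a * b) ->
  finitely_based_V (ideal_adjoin M a) -> finitely_based_V (ideal_adjoin M b) ->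
  finitely_based_V M.
Proof.
move=> M_ideal Mab [Fa [Fa_fin VFa Fa_cov]] [Fb [Fb_fin VFb Fb_cov]].
exists (fun q => Fa q \/ Fb q); split; first exact: finitely_manyU.
  by move=> q [/VFa | /VFb] Vq x Mx; apply: Vq; apply: sub_ideal_adjoin.
move=> p Mp; have [p_ideal _ p_prime] := svalP p.
have [pa | pb] := p_prime a b (Mp _ Mab).
- by have [q Faq] := Fa_cov p (ideal_adjoin_sub p_ideal Mp pa); exists q; first left.
- by have [q Fbq] := Fb_cov p (ideal_adjoin_sub p_ideal Mp pb); exists q; first right.
Qed.

Lemma noetherian_finitely_based_V J :
  noetherian R -> is_ideal J -> finitely_based_V J.
Proof.
move=> noethR J_ideal; apply: contrapT => J_bad.
have [M [M_ideal M_bad M_max]] :=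
  noetherian_maximal (P := fun I => ~ finitely_based_V I) noethR J_ideal J_bad.
apply: M_bad; have [M1 | M1] := lem (M 1); first exact: finitely_based_V_unit.
have [M_prime | M_nprime] := lem (is_prime_ideal M).
  exact: (finitely_based_V_prime (exist _ M M_prime)).
have [a [b [Mab Ma Mb]]] : exists a b, [/\ M (a * b), ~ M a & ~ M b].
  apply: contrapT => no_ab; apply: M_nprime; split=> // a b Mab.
  by apply: contrapT => /not_orP [Ma Mb]; apply: no_ab; exists a, b.
have adjoin_good c : ~ M c -> finitely_based_V (ideal_adjoin M c).
  move=> Mc; apply: contrapT => bad; apply: Mc.
  apply: (M_max _ (ideal_adjoin_ideal c M_ideal) bad); last exact: ideal_adjoin_mem.
  exact: sub_ideal_adjoin.
exact: finitely_based_V_split Mab (adjoin_good a Ma) (adjoin_good b Mb).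
Qed.

Definition chain_from p (n : nat) : Prop :=
  exists c : nat -> R -> Prop, prime_chain n c /\ c 0%N = sval p.

Lemma chain_from0 p : chain_from p 0.
Proof.
exists (fun=> sval p); split=> //; split=> [i _ | i]; [exact: svalP | by rewrite ltn0].
Qed.

Lemma chain_from_cons p q n :
  sub_ideal (sval q) (sval p) -> (exists x, sval p x /\ ~ sval q x) ->
  chain_from p n -> chain_from q n.+1.
Proof.
move=> qp [x px] [c [[c_prime c_incr] c0]].
exists (fun i => if i is j.+1 then c j else sval q); split=> //; split.
- by case=> [|i] /= lti; [exact: svalP | exact: c_prime].
- by case=> [|i] /= lti; [rewrite c0; split=> //; exists x | exact: c_incr].
Qed.

End Ideals.

Section Dimension.
Variables (R : comNzRingType) (d : nat).
Hypothesis dimR : forall n (c : nat -> R -> Prop), prime_chain n c -> (n <= d)%N.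
Implicit Types p q : spec R.

Lemma chain_from_exists p : exists n, `[< chain_from p n >].
Proof. by exists 0%N; apply/asboolP; apply: chain_from0. Qed.

Lemma chain_from_bounded p n : `[< chain_from p n >] -> (n <= d)%N.
Proof. by move=> /asboolP [c [/dimR]]. Qed.

Definition coheight p : nat := ex_maxn (chain_from_exists p) (@chain_from_bounded p).

Lemma coheight_chain p : chain_from p (coheight p).
Proof. by rewrite /coheight; case: ex_maxnP => m /asboolP. Qed.

Lemma coheight_max p n : chain_from p n -> (n <= coheight p)%N.
Proof. by rewrite /coheight; case: ex_maxnP => m _ m_max /asboolP /m_max. Qed.

Lemma coheight_le p : (coheight p <= d)%N.
Proof. exact/chain_from_bounded/asboolP/coheight_chain. Qed.

Lemma coheight_lt p q :
  sub_ideal (sval q) (sval p) -> (exists x, sval p x /\ ~ sval q x) ->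
  (coheight p < coheight q)%N.
Proof.
by move=> qp pq; apply/coheight_max/(chain_from_cons qp pq (coheight_chain p)).
Qed.

Section RegularJacobson.
Variable t : R.
Hypotheses (noethR : noetherian R) (t_reg : non_zero_divisor t) (t_jac : in_jacobson t).

Lemma prime_above_mem p : ~ sval p t ->
  exists2 q : spec R, sub_ideal (sval p) (sval q) & sval q t.
Proof.
move=> pt; have [p_ideal p1 _] := svalP p.
have [||||q [pt_q _]] := noetherian_prime_avoiding (S := fun x => x = 1)
    (I := ideal_adjoin (sval p) t) noethR.
- by [].
- by move=> x y -> ->; rewrite mulr1.
- exact: ideal_adjoin_ideal.
- by move=> x ptx x1; apply: (ideal_adjoin_jacobson p_ideal p1 t_jac); rewrite -x1.
by exists q => [x px|]; apply: pt_q; [exact: sub_ideal_adjoin | exact: ideal_adjoin_mem].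
Qed.

Lemma prime_below_notin p :
  exists2 q : spec R, sub_ideal (sval q) (sval p) & ~ sval q t.
Proof.
have [p_ideal p1 p_prime] := svalP p.
pose S x := exists k u, ~ sval p u /\ x = t ^+ k * u.
have zero_ideal : is_ideal (fun x : R => x = 0).
  by split=> // [x y -> ->|r x ->]; rewrite ?addr0 ?mulr0.
have [||//||q [_ qS]] :=
  noetherian_prime_avoiding (S := S) (I := fun x => x = 0) noethR.
- by exists 0%N, 1; rewrite expr0 mulr1.
- move=> _ _ [k [u [pu ->]]] [l [u' [pu' ->]]].
  exists (k + l)%N, (u * u'); rewrite exprD mulrACA; split=> //.
  by case/p_prime.
- move=> x -> [k [u [pu /esym /non_zero_divisorX u0]]].
  by apply: pu; rewrite (u0 t_reg); case: p_ideal.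
exists q => [x qx|qt].
- by apply: contrapT => px; apply: (qS x qx); exists 0%N, x; rewrite expr0 mul1r.
- by apply: (qS t qt); exists 1%N, 1; rewrite expr1 mulr1.
Qed.

Lemma coheight_lt_dim p : sval p t -> (coheight p < d)%N.
Proof.
move=> pt; have [q qp qt] := prime_below_notin p.
exact: leq_trans (coheight_lt qp (ex_intro _ t (conj pt qt))) (coheight_le q).
Qed.

Lemma coheight_gt0 p : ~ sval p t -> (0 < coheight p)%N.
Proof.
move=> pt; have [q pq qt] := prime_above_mem pt.
exact: leq_ltn_trans (coheight_lt pq (ex_intro _ t (conj qt pt))).
Qed.

Definition delta p : nat :=
  if `[< sval p t >] then coheight p else (coheight p).-1.

Lemma delta_le p : (delta p <= d.-1)%N.
Proof.
rewrite /delta; case: asboolP => pt.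
- by have := coheight_lt_dim pt; case: d.
- by have := coheight_le p; rewrite -!subn1; lia.
Qed.

Lemma delta_lt p q :
  sub_ideal (sval q) (sval p) -> (exists x, sval p x /\ ~ sval q x) ->
  (sval q t <-> sval p t) -> (delta p < delta q)%N.
Proof.
move=> qp pq qt_pt; have := coheight_lt qp pq.
rewrite /delta; case: (asboolP (sval p t)) => pt.
- by rewrite asboolT //; apply/qt_pt.
rewrite asboolF; last by move/qt_pt.
by have := coheight_gt0 pt; rewrite -!subn1; lia.
Qed.

Lemma gd_minimal_eq J p q : gd_minimal delta J p -> in_V J q ->
  sub_ideal (sval q) (sval p) -> (sval q t <-> sval p t) -> q = p.
Proof.
move=> [_ p_min] Jq qp qt_pt; apply: spec_eq => // x px; apply: contrapT => qx.
by apply: p_min; exists q; split=> //; split=> //; apply: delta_lt => //; exists x.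
Qed.

Theorem gen_dim_le_regular_jacobson : gen_dim_le R d.-1.
Proof.
exists delta; split=> [J J_ideal|]; last exact: delta_le.
have [F [F_fin VF F_cov]] := noetherian_finitely_based_V noethR J_ideal.
have [Ft [Ft_fin VFt Ft_cov]] :=
  noetherian_finitely_based_V noethR (ideal_adjoin_ideal t J_ideal).
apply: (finitely_many_sub _ (finitely_manyU F_fin Ft_fin)).
move=> p p_min; have [Jp _] := p_min; have [p_ideal _ _] := svalP p.
have [pt | pt] := lem (sval p t).
- have [q Ftq qp] := Ft_cov p (ideal_adjoin_sub p_ideal Jp pt).
  have Vq := VFt q Ftq; have qt : sval q t by apply/Vq/ideal_adjoin_mem.
  right; rewrite -(gd_minimal_eq p_min _ qp) //.
  by move=> x Jx; apply/Vq/sub_ideal_adjoin.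
- have [q Fq qp] := F_cov p Jp.
  left; rewrite -(gd_minimal_eq p_min (VF q Fq) qp) //.
  by split=> // /qp.
Qed.

End RegularJacobson.

End Dimension.

Lemma comap_ideal (A B : comNzRingType) (f : {rmorphism A -> B}) (I : B -> Prop) :
  is_ideal I -> is_ideal (fun a => I (f a)).
Proof.
case=> I0 ID IM; split.
- by rewrite rmorph0.
- by move=> x y Ix Iy; rewrite rmorphD; apply: ID.
- by move=> r x Ix; rewrite rmorphM; apply: IM.
Qed.

Lemma comap_prime (A B : comNzRingType) (f : {rmorphism A -> B}) (P : B -> Prop) :
  is_prime_ideal P -> is_prime_ideal (fun a => P (f a)).
Proof.
case=> P_ideal P1 PP; split; first exact: comap_ideal.
- by rewrite rmorph1.
- by move=> a b; rewrite rmorphM; apply: PP.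
Qed.

Section Localization.
Variables (A B : comNzRingType) (s : A) (f : {rmorphism A -> B}).
Hypothesis locf : is_localization_1sA s f.

Lemma loc_fraction (b : B) :
  exists a c v, f (1 + s * c) * v = 1 /\ b = f a * v.
Proof.
have [f_unit f_surj _] := locf.
have [a [u [[c ->] bu]]] := f_surj b; have [v uv] := f_unit _ (ex_intro _ c erefl).
by exists a, c, v; rewrite -bu -mulrA uv mulr1.
Qed.

Lemma loc_ideal_mem (I : B -> Prop) (b : B) :
  is_ideal I -> I b <-> exists a v, I (f a) /\ b = f a * v.
Proof.
move=> [_ _ IM]; split=> [Ib | [a [v [Ia ->]]]]; last by rewrite mulrC; apply: IM.
have [a [c [v [uv ba]]]] := loc_fraction b; exists a, v; split=> //.
have -> : f a = f (1 + s * c) * b by rewrite ba mulrCA uv mulr1.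
exact: IM.
Qed.

Lemma loc_noetherian : noetherian A -> noetherian B.
Proof.
move=> noethA I I_ideal I_incr.
have [n|n x|N IN] := noethA (fun n a => I n (f a)).
- exact: comap_ideal.
- exact: I_incr.
exists N => n Nn b /(loc_ideal_mem _ (I_ideal n)) [a [v [Ia ->]]].
by apply/(loc_ideal_mem _ (I_ideal N)); exists a, v; split=> //; apply: IN Nn _ Ia.
Qed.

Lemma loc_comap_proper (P Q : B -> Prop) : is_ideal P -> is_ideal Q ->
  (exists x, P x /\ ~ Q x) -> exists a, P (f a) /\ ~ Q (f a).
Proof.
move=> P_ideal Q_ideal [x [/(loc_ideal_mem _ P_ideal) [a [v [Pa xa]]] Qx]].
by exists a; split=> // Qa; apply/Qx/(loc_ideal_mem _ Q_ideal); exists a, v.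
Qed.

Lemma loc_prime_chain n (c : nat -> B -> Prop) :
  prime_chain n c -> prime_chain n (fun i a => c i (f a)).
Proof.
move=> [c_prime c_incr]; split=> [i /c_prime | i lti]; first exact: comap_prime.
have [ci_ci1 ci1_ci] := c_incr i lti; split=> [a|]; first exact: ci_ci1.
have [[ci1_ideal _ _] [ci_ideal _ _]] := (c_prime _ lti, c_prime _ (ltnW lti)).
exact: loc_comap_proper.
Qed.

Lemma loc_non_zero_divisor : non_zero_divisor s -> non_zero_divisor (f s).
Proof.
have [f_unit _ f_ker] := locf.
move=> s_reg b; have [a [c [v [uv ->]]]] := loc_fraction b => sb0.
have [|u [[e ->] usa0]] := f_ker (s * a).
  have -> : f (s * a) = f (1 + s * c) * (f s * (f a * v)).
    by rewrite -[f (s * a)]mulr1 -uv rmorphM; ring.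
  by rewrite sb0 mulr0.
have a0 : (1 + s * e) * a = 0 by apply: s_reg; rewrite mulrCA.
have [w uw] := f_unit _ (ex_intro _ e erefl).
have fa0 : f a = 0 by rewrite -[f a]mul1r -uw mulrAC -rmorphM a0 rmorph0 mul0r.
by rewrite fa0 mul0r.
Qed.

Lemma loc_in_jacobson : in_jacobson (f s).
Proof.
have [f_unit _ _] := locf.
move=> b; have [a [c [v [uv ->]]]] := loc_fraction b.
have [w uw] := f_unit _ (ex_intro _ (c + a) erefl).
have unit_prod : (1 + f s * (f a * v)) * f (1 + s * c) = f (1 + s * (c + a)).
  have -> : (1 + f s * (f a * v)) * f (1 + s * c)
      = f (1 + s * c) + f s * f a * (f (1 + s * c) * v) by ring.
  by rewrite uv mulr1 -rmorphM -rmorphD mulrDr addrA.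
by exists (f (1 + s * c) * w); rewrite mulrA unit_prod.
Qed.

End Localization.

Theorem lemma3p2 (A B : comNzRingType) (d : nat) (s : A)
    (f : {rmorphism A -> B}) :
  noetherian A -> krull_dim_eq A d -> (1 <= d)%N ->
  non_zero_divisor s -> is_localization_1sA s f ->
  gen_dim_le B d.-1.
Proof.
move=> noethA [_ dimA] _ s_reg locf.
have dimB n (c : nat -> B -> Prop) : prime_chain n c -> (n <= d)%N.
  by move/(loc_prime_chain locf); apply: dimA.
exact: (gen_dim_le_regular_jacobson dimB (loc_noetherian locf noethA)
  (loc_non_zero_divisor locf s_reg) (loc_in_jacobson locf)).
Qed.
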